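(* Let $D\subset\mathbb N^n$ be finite, not contained in any coordinate hyperplane, $p$ a prime, $k\ge1$, and let $\mathbf e_{-1},\mathbf e_0,\dots,\mathbf e_{k-1}\in\Sigma_p(D)$ (not necessarily distinct) with $V(\mathbf e_i,\mathbf e_{i-1})\ne\emptyset$ for $0\le i\le k-1$. For every $(V_i)_{0\le i\le k-1}\in\prod_{i=0}^{k-1}V(\mathbf e_i,\mathbf e_{i-1})$, $V_i=(v_{i\mathbf d})_{\mathbf d}$, there is a minimal $U=(u_{\mathbf d})\in E_{D,p}(r)$ for some $r\ge k$ such that for each $\mathbf d$ the remainder of $u_{\mathbf d}$ modulo $p^k$ is $\sum_{i=0}^{k-1}p^iv_{i\mathbf d}$, and $\varphi_U(i)=\mathbf e_{r-1-i}$ for all $r-k\le i\le r$.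
   Context: $s_p$ = base-$p$ digit sum. $E_{D,p}(r)$ = set of $U=(u_{\mathbf d})\in\{0,\dots,p^r-1\}^D$ with $\sum u_{\mathbf d}\mathbf d\equiv0\pmod{p^r-1}$ and all coordinates of $\sum u_{\mathbf d}\mathbf d$ positive; $s_p(U)=\sum s_p(u_{\mathbf d})$; $\delta_p(D)=\frac1{p-1}\min_{r\ge1}\min_{U\in E_{D,p}(r)}s_p(U)/r$; minimal means $s_p(U)=(p-1)r\delta_p(D)$. Shift $\delta_r$: $k\mapsto pk\bmod(p^r-1)$ for $k\le p^r-2$, $p^r-1\mapsto p^r-1$, coordinatewise. $\varphi_U(j)=\frac1{p^r-1}\sum\mathbf d(\delta_r^jU)_{\mathbf d}$ for $j\in\mathbb Z/r\mathbb Z$ (indices mod $r$); irreducible means $\varphi_U$ injective; $MI_{D,p}$ = minimal irreducible elements of all lengths; $\Sigma_p(D)=\bigcup_{U\in MI_{D,p}}\mathrm{Im}\varphi_U$. $\psi(U)=(u_{\mathbf d}\bmod p)_{\mathbf d}$; $V(\mathbf e,\mathbf e')=\{\psi(U):U\in MI_{D,p},\varphi_U(-1)=\mathbf e,\varphi_U(0)=\mathbf e'\}$. *)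

From HB Require Import structures.
From mathcomp Require Import all_boot all_order all_algebra.
From mathcomp Require Import finmap.
Set Implicit Arguments. Unset Strict Implicit. Unset Printing Implicit Defensive.
Import Order.TTheory GRing.Theory Num.Theory.
Local Open Scope fset_scope.

Section Defs.
Variables (n p : nat) (D : {fset n.-tuple nat}).

Definition fam := {ffun D -> nat}.

Definition sp (m : nat) : nat := \sum_(i < m.+1) ((m %/ p ^ i) %% p).

Definition vsum (U : fam) : n.-tuple nat :=
  [tuple \sum_(d : D) U d * tnth (val d) j | j < n].

Definition inE (r : nat) (U : fam) : Prop :=
  0 < r /\ (forall d : D, U d < p ^ r) /\
  (forall j : 'I_n, tnth (vsum U) j %% (p ^ r - 1) = 0 /\ 0 < tnth (vsum U) j).

Definition spU (U : fam) : nat := \sum_(d : D) sp (U d).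

(* minimal: s_p(U)/r attains the minimum of s_p(U')/r' over all r' >= 1, U' in E(r'),
   i.e. s_p(U) = (p-1) r delta_p(D). *)
Definition minimal (r : nat) (U : fam) : Prop :=
  inE r U /\ forall (r' : nat) (U' : fam), inE r' U' -> spU U * r' <= spU U' * r.

Definition shift (r k : nat) : nat :=
  if k <= p ^ r - 2 then (p * k) %% (p ^ r - 1) else p ^ r - 1.

Definition shiftU (r : nat) (U : fam) : fam := [ffun d => shift r (U d)].

(* phi_U(j), j taken modulo r (so phi_U(-1) = phi r U (r-1)) *)
Definition phi (r : nat) (U : fam) (j : nat) : n.-tuple nat :=
  [tuple tnth (vsum (iter (j %% r) (shiftU r) U)) i %/ (p ^ r - 1) | i < n].

Definition irreducible (r : nat) (U : fam) : Prop :=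
  forall i j, i < r -> j < r -> phi r U i = phi r U j -> i = j.

Definition inMI (r : nat) (U : fam) : Prop := minimal r U /\ irreducible r U.

Definition Sigma (e : n.-tuple nat) : Prop :=
  exists (r : nat) (U : fam) (j : nat), inMI r U /\ j < r /\ phi r U j = e.

Definition psi (U : fam) : fam := [ffun d => U d %% p].

Definition Vset (e e' : n.-tuple nat) (v : fam) : Prop :=
  exists (r : nat) (U : fam), inMI r U /\ phi r U (r - 1) = e /\ phi r U 0 = e' /\ v = psi U.

End Defs.

Arguments vsum {n} D U.
Arguments inE {n} p D r U.
Arguments spU {n} p D U.
Arguments minimal {n} p D r U.
Arguments shiftU {n} p D r U.
Arguments phi {n} p D r U j.
Arguments irreducible {n} p D r U.
Arguments inMI {n} p D r U.
Arguments Sigma {n} p D e.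
Arguments psi {n} p D U.
Arguments Vset {n} p D e e' v.

(* Reading the digits of U cyclically, the values of phi_U at two positions j and
   j + m are linked by  p^m phi_U(j) = phi_U(j + m) + sum_d N_d d,  where N is the block
   of m base-p digits of U crossed in between; conversely, along a closed chain of
   digit blocks these relations determine phi at every block boundary, and the
   concatenated blocks form an element of E_{D,p}.  Each W_i in MI_{D,p} with
   psi(W_i) = V_i splits into its top r_i - 1 digits, which lead from e_{i-1} to e_i,
   and its last digit V_i, which leads back.  Concatenating the top parts of
   W_0, ..., W_{k-1} followed by V_{k-1}, ..., V_0 closes the chain.  The resulting U
   has length sum r_i and digit sum sum s_p(W_i), so it is minimal because every W_i
   is; its last k digits are V_{k-1}, ..., V_0, and along them phi_U runs through
   e_{k-1}, ..., e_{-1}. *)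

From Pilot Require Import Defs.
From HB Require Import structures.
From mathcomp Require Import all_boot all_order all_algebra.
From mathcomp Require Import finmap zify.
Set Implicit Arguments. Unset Strict Implicit. Unset Printing Implicit Defensive.
Import Order.TTheory GRing.Theory Num.Theory.
Local Open Scope fset_scope.
Local Open Scope nat_scope.

Lemma ltn_mul_add q M a b : a < q -> b < M -> a * M + b < q * M.
Proof.
move=> aq bM; apply: leq_trans (_ : a.+1 * M <= _).
  by rewrite mulSn addnC ltn_add2r.
by rewrite leq_mul2r aq orbT.
Qed.

Section Digits.
Variable p : nat.
Hypothesis p_gt1 : 1 < p.

Let p_gt0 : 0 < p. Proof. exact: ltnW. Qed.

Lemma shift_rotate r a b : a < p -> b < p ^ r ->
  shift p r.+1 (a * p ^ r + b) = b * p + a.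
Proof.
move=> ap br; have Pr : 0 < p ^ r by rewrite expn_gt0 p_gt0.
rewrite /shift expnS; case: ifP => [x_small | /negbT x_big].
  have -> : p * (a * p ^ r + b) = a * (p * p ^ r - 1) + (b * p + a).
    rewrite mulnBr muln1 mulnDr; nia.
  rewrite modnMDl modn_small //; move: x_small; nia.
have [-> ->] : a = p.-1 /\ b = (p ^ r).-1 by move: x_big; nia.
nia.
Qed.

Lemma iter_shift_rotate i j a b : a < p ^ j -> b < p ^ i ->
  iter j (shift p (i + j)) (a * p ^ i + b) = b * p ^ j + a.
Proof.
elim: j i a b => [|j IHj] i a b.
  by rewrite expn0 ltnS leqn0 => /eqP-> _; rewrite addn0 !mul0n muln1 addn0.
move=> aj bi; have Pj : 0 < p ^ j by rewrite expn_gt0 p_gt0.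
have ca : a %/ p ^ j < p by rewrite ltn_divLR // -expnS.
have a'j : a %% p ^ j < p ^ j by rewrite ltn_mod.
have head : a * p ^ i + b = a %/ p ^ j * p ^ (i + j) + (a %% p ^ j * p ^ i + b).
  by rewrite {1}(divn_eq a (p ^ j)) expnD; nia.
rewrite iterSr addnS head shift_rotate //; last by rewrite (addnC i) expnD ltn_mul_add.
have -> : (a %% p ^ j * p ^ i + b) * p + a %/ p ^ j
          = a %% p ^ j * p ^ i.+1 + (b * p + a %/ p ^ j) by rewrite expnS; nia.
rewrite -addSn IHj //; last by rewrite expnSr ltn_mul_add.
by rewrite {3}(divn_eq a (p ^ j)) expnS; nia.
Qed.

Lemma sp_digits m N : m < p ^ N -> sp p m = \sum_(i < N) m %/ p ^ i %% p.
Proof.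
have widen N1 N2 : m < p ^ N1 -> N1 <= N2 ->
    \sum_(i < N2) m %/ p ^ i %% p = \sum_(i < N1) m %/ p ^ i %% p.
  move=> mN1 N12; rewrite (big_ord_widen N2 (fun i => m %/ p ^ i %% p) N12) [RHS]big_mkcond /=.
  apply: eq_bigr => i _; case: ifP => // /negbT; rewrite -leqNgt => N1i.
  by rewrite divn_small ?mod0n // (leq_trans mN1) ?leq_exp2l.
have m_lt : m < p ^ m.+1 by rewrite (ltn_trans (ltn_expl m p_gt1)) // ltn_exp2l.
move=> mN; rewrite /sp; case: (leqP N m.+1) => [Nm | /ltnW mN'].
  exact: widen.
by rewrite (widen _ _ m_lt mN').
Qed.

Lemma sp0 : sp p 0 = 0.
Proof. by rewrite (@sp_digits 0 0) ?big_ord0 ?expn0. Qed.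

Lemma sp_mulp_add a b : b < p -> sp p (a * p + b) = sp p a + b.
Proof.
move=> bp; set m := a * p + b.
have a_le_m : a <= m by rewrite /m (leq_trans (leq_pmulr _ p_gt0)) ?leq_addr.
have a_lt : a < p ^ m by rewrite (leq_trans (ltn_expl a p_gt1)) // leq_exp2l.
have m_lt : m < p ^ m.+1 by rewrite (ltn_trans (ltn_expl m p_gt1)) // ltn_exp2l.
rewrite (sp_digits m_lt) (sp_digits a_lt) big_ord_recl expn0 divn1.
rewrite /m modnMDl modn_small // addnC; congr (_ + _); apply: eq_bigr => i _.
by rewrite lift0 expnS divnMA divnMDl // (divn_small bp) addn0.
Qed.

Lemma sp_mulexp_add a m b : b < p ^ m -> sp p (a * p ^ m + b) = sp p a + sp p b.
Proof.
elim: m b => [|m IHm] b.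
  by rewrite expn0 ltnS leqn0 => /eqP->; rewrite muln1 addn0 sp0 addn0.
move=> bm; have b_div : b %/ p < p ^ m by rewrite ltn_divLR // -expnSr.
have -> : a * p ^ m.+1 + b = (a * p ^ m + b %/ p) * p + b %% p.
  by rewrite {1}(divn_eq b p) expnSr; nia.
rewrite sp_mulp_add ?ltn_mod // IHm // [in sp p b](divn_eq b p) sp_mulp_add ?ltn_mod //.
by rewrite addnA.
Qed.

End Digits.

Lemma spU_div_mod p n (D : {fset n.-tuple nat}) (U : fam D) : 1 < p ->
  spU p D U = spU p D [ffun d => U d %/ p] + spU p D [ffun d => U d %% p].
Proof.
move=> p_gt1; rewrite /spU -big_split; apply: eq_bigr => d _; rewrite !ffunE.
have Up := ltn_pmod (U d) (ltnW p_gt1).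
have := @sp_mulp_add _ p_gt1 0 _ Up; rewrite mul0n add0n (sp0 p_gt1) => ->.
by rewrite {1}(divn_eq (U d) p) (sp_mulp_add p_gt1).
Qed.

Section Transitions.
Variables (p n : nat) (D : {fset n.-tuple nat}).

(* The relation  p^m x = y + sum_d N_d d.  By [phi_transitions] it holds between
   phi_U(j) and phi_U(j + m) when N is the block of m digits of U crossed in between. *)
Definition transition (x : n.-tuple nat) (m : nat) (N : fam D) (y : n.-tuple nat) :=
  forall j, p ^ m * tnth x j = tnth y j + tnth (vsum D N) j.

Lemma tnth_vsum (N : fam D) j : tnth (vsum D N) j = \sum_(d : D) N d * tnth (val d) j.
Proof. by rewrite tnth_mktuple. Qed.

Lemma tnth_vsum0 j : tnth (vsum D [ffun=> 0]) j = 0.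
Proof. by rewrite tnth_vsum big1 // => d _; rewrite ffunE. Qed.

Lemma tnth_vsum_mulD (f g : D -> nat) M j :
  tnth (vsum D [ffun d => f d * M + g d]) j
  = tnth (vsum D [ffun d => f d]) j * M + tnth (vsum D [ffun d => g d]) j.
Proof.
rewrite !tnth_vsum big_distrl -big_split; apply: eq_bigr => d _.
by rewrite !ffunE mulnDl mulnAC.
Qed.

Lemma transition_cat x m1 N1 y m2 N2 z :
  transition x m1 N1 y -> transition y m2 N2 z ->
  transition x (m1 + m2) [ffun d => N1 d * p ^ m2 + N2 d] z.
Proof.
move=> xy yz j; rewrite tnth_vsum_mulD !ffunK expnD mulnAC xy mulnDl (mulnC (tnth y j)) yz.
by rewrite addnAC addnA.
Qed.

End Transitions.

(* Coordinatewise core of [phi_transitions]: [A] and [B] are the contributions of the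
   high and the low digits of [U], [x] and [y] the coordinates of [phi_U(0)] and
   [phi_U(j)]. *)
Lemma rotation_eqs Q J P A B x y : 0 < P -> 0 < Q -> J * P = Q.+1 -> coprime Q P ->
  A * P + B = x * Q -> y = (B * J + A) %/ Q -> J * x = y + A /\ P * y = x + B.
Proof.
move=> P_gt0 Q_gt0 JP coQP AB ->.
have FP : (B * J + A) * P = (B + x) * Q.
  by rewrite mulnDl -mulnA JP mulnSr -addnA (addnC B) AB mulnDl.
have dvdF : Q %| B * J + A by rewrite -(Gauss_dvdl _ coQP) FP dvdn_mull.
have yP : P * ((B * J + A) %/ Q) = x + B.
  by apply/eqP; rewrite -(eqn_pmul2r Q_gt0) -mulnA (mulnC P) divnK // FP addnC.
split=> //; apply/eqP; rewrite -(eqn_pmul2r P_gt0) mulnAC JP mulSn (mulnC Q) -AB.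
by rewrite mulnDl (mulnC (_ %/ Q)) yP [A * P + B]addnC addnA.
Qed.

Section PhiOfE.
Variables (p n : nat) (D : {fset n.-tuple nat}) (r : nat) (U : fam D).
Hypotheses (p_gt1 : 1 < p) (U_inE : Defs.inE p D r U).

Let r_gt0 : 0 < r. Proof. by case: U_inE. Qed.
Let U_lt d : U d < p ^ r. Proof. by case: U_inE => _ []. Qed.
Let Q_gt0 : 0 < p ^ r - 1.
Proof. by rewrite subn_gt0 -(exp1n r) ltn_exp2r. Qed.

Lemma tnth_vsum_phi0 j : tnth (vsum D U) j = tnth (phi p D r U 0) j * (p ^ r - 1).
Proof.
case: U_inE => _ [_ /(_ j) [dvdQ _]].
by rewrite /phi tnth_mktuple mod0n /= divnK // /dvdn dvdQ.
Qed.

Lemma phi0_gt0 j : 0 < tnth (phi p D r U 0) j.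
Proof.
case: U_inE => _ [_ /(_ j) [_]].
by rewrite tnth_vsum_phi0 muln_gt0 => /andP[].
Qed.

Lemma iter_shiftU j : j <= r ->
  iter j (shiftU p D r) U = [ffun d => U d %% p ^ (r - j) * p ^ j + U d %/ p ^ (r - j)].
Proof.
move=> jr; have -> : iter j (shiftU p D r) U = [ffun d => iter j (shift p r) (U d)].
  elim: j {jr} => [|j IHj] /=; first by apply/ffunP => d; rewrite ffunE.
  by rewrite IHj; apply/ffunP => d; rewrite !ffunE.
apply/ffunP => d; rewrite !ffunE.
have P_gt0 : 0 < p ^ (r - j) by rewrite expn_gt0 ltnW.
have hi : U d %/ p ^ (r - j) < p ^ j by rewrite ltn_divLR // -expnD subnKC ?U_lt.
have := iter_shift_rotate p_gt1 hi (ltn_pmod (U d) P_gt0).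
by rewrite subnK // -divn_eq.
Qed.

Lemma tnth_phi j c : j <= r ->
  tnth (phi p D r U j) c =
  (tnth (vsum D [ffun d => U d %% p ^ (r - j)]) c * p ^ j
   + tnth (vsum D [ffun d => U d %/ p ^ (r - j)]) c) %/ (p ^ r - 1).
Proof.
move=> jr; rewrite /phi tnth_mktuple -tnth_vsum_mulD -iter_shiftU //.
case: (ltngtP j r) jr => [jr _ | // | -> _]; first by rewrite modn_small.
rewrite modnn [in RHS]iter_shiftU // subnn; congr (tnth (vsum D _) c %/ _).
by apply/ffunP => d; rewrite ffunE expn0 modn1 divn1.
Qed.

Lemma phi_transitions j : j <= r ->
  transition p (phi p D r U 0) j [ffun d => U d %/ p ^ (r - j)] (phi p D r U j) /\
  transition p (phi p D r U j) (r - j) [ffun d => U d %% p ^ (r - j)] (phi p D r U 0).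
Proof.
move=> jr; have QS : (p ^ r - 1).+1 = p ^ r by rewrite subn1 prednK // expn_gt0 ltnW.
have JP : p ^ j * p ^ (r - j) = (p ^ r - 1).+1 by rewrite -expnD subnKC // QS.
have coQP : coprime (p ^ r - 1) (p ^ (r - j)).
  by apply: coprimeXr; have := coprimenS (p ^ r - 1); rewrite QS coprime_pexpr.
have AB c : tnth (vsum D [ffun d => U d %/ p ^ (r - j)]) c * p ^ (r - j)
            + tnth (vsum D [ffun d => U d %% p ^ (r - j)]) c
            = tnth (phi p D r U 0) c * (p ^ r - 1).
  rewrite -tnth_vsum_mulD -tnth_vsum_phi0; congr (tnth (vsum D _) c).
  by apply/ffunP => d; rewrite ffunE -divn_eq.
have P_gt0 : 0 < p ^ (r - j) by rewrite expn_gt0 ltnW.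
have coord c := rotation_eqs P_gt0 Q_gt0 JP coQP (AB c) (tnth_phi c jr).
by split=> c; have [] := coord c.
Qed.

Lemma phi_eq_transition j y : j <= r ->
  transition p y (r - j) [ffun d => U d %% p ^ (r - j)] (phi p D r U 0) ->
  phi p D r U j = y.
Proof.
move=> jr yx; apply: eq_from_tnth => c.
have P_gt0 : 0 < p ^ (r - j) by rewrite expn_gt0 ltnW.
by apply/eqP; rewrite -(eqn_pmul2l P_gt0) (yx c) ((phi_transitions jr).2 c).
Qed.

Lemma phi_last_transitions :
  transition p (phi p D r U 0) (r - 1) [ffun d => U d %/ p] (phi p D r U (r - 1)) /\
  transition p (phi p D r U (r - 1)) 1 [ffun d => U d %% p] (phi p D r U 0).
Proof. by have := phi_transitions (leq_subr 1 r); rewrite subKn // expn1. Qed.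

End PhiOfE.

Lemma inE_transition p n (D : {fset n.-tuple nat}) r (U : fam D) x :
  1 < p -> 0 < r -> (forall d, U d < p ^ r) ->
  transition p x r U x -> (forall j, 0 < tnth x j) ->
  Defs.inE p D r U /\ phi p D r U 0 = x.
Proof.
move=> p_gt1 r_gt0 U_lt xx x_gt0.
have Q_gt0 : 0 < p ^ r - 1 by rewrite subn_gt0 -(exp1n r) ltn_exp2r.
have vsumU j : tnth (vsum D U) j = tnth x j * (p ^ r - 1).
  by rewrite mulnBr muln1 mulnC xx addKn.
split; first by split=> //; split=> // j; rewrite vsumU modnMl muln_gt0 x_gt0.
by apply: eq_from_tnth => j; rewrite /phi tnth_mktuple mod0n /= vsumU mulnK.
Qed.

Section Blocks.
Variables (p n : nat) (D : {fset n.-tuple nat}).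
Hypothesis p_gt1 : 1 < p.

Fixpoint blocks (m : nat -> nat) (N : nat -> fam D) (K : nat) : fam D :=
  if K is K'.+1 then [ffun d => blocks m N K' d * p ^ m K' + N K' d] else [ffun=> 0].

Variables (m : nat -> nat) (N : nat -> fam D).

Lemma blocks_lt K : (forall i, i < K -> forall d, N i d < p ^ m i) ->
  forall d, blocks m N K d < p ^ (\sum_(i < K) m i).
Proof.
elim: K => [|K IHK] N_lt d; first by rewrite ffunE big_ord0.
rewrite ffunE big_ord_recr /= expnD ltn_mul_add ?N_lt ?IHK // => i iK.
exact/N_lt/ltnW.
Qed.

Lemma sp_blocks K : (forall i, i < K -> forall d, N i d < p ^ m i) ->
  forall d, sp p (blocks m N K d) = \sum_(i < K) sp p (N i d).
Proof.
elim: K => [|K IHK] N_lt d; first by rewrite ffunE big_ord0 sp0.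
rewrite ffunE sp_mulexp_add ?N_lt // big_ord_recr /= IHK // => i iK.
exact/N_lt/ltnW.
Qed.

Lemma transition_blocks (x : nat -> n.-tuple nat) K :
  (forall i, i < K -> transition p (x i) (m i) (N i) (x i.+1)) ->
  transition p (x 0) (\sum_(i < K) m i) (blocks m N K) (x K).
Proof.
elim: K => [|K IHK] xN; first by move=> j; rewrite big_ord0 mul1n tnth_vsum0 addn0.
rewrite big_ord_recr; apply: transition_cat; last exact: xN.
by apply: IHK => i iK; apply/xN/ltnW.
Qed.

Lemma blocks_split s K d :
  blocks m N (s + K) d
  = blocks m N s d * p ^ (\sum_(i < K) m (s + i))
    + blocks (fun i => m (s + i)) (fun i => N (s + i)) K d.
Proof.
elim: K => [|K IHK]; first by rewrite addn0 big_ord0 muln1 ffunE addn0.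
by rewrite addnS /= !ffunE IHK big_ord_recr /= expnD mulnDl mulnA addnA.
Qed.

Lemma blocks_unit K d : (forall i, i < K -> m i = 1) ->
  blocks m N K d = \sum_(i < K) p ^ i * N (K - i.+1) d.
Proof.
elim: K => [|K IHK] m1; first by rewrite ffunE big_ord0.
rewrite /= ffunE IHK => [|i iK]; last exact/m1/ltnW.
rewrite m1 // big_ord_recl big_distrl addnC subn1 /= expn0 mul1n; congr (_ + _).
by apply: eq_bigr => i _; rewrite /bump /= add1n subSS expn1 expnSr mulnAC.
Qed.

End Blocks.

Lemma blocks_cycle p n (D : {fset n.-tuple nat}) (x : nat -> n.-tuple nat) m
    (N : nat -> fam D) K :
  1 < p -> (forall i, i < K -> forall d, N i d < p ^ m i) ->
  (forall i, i < K -> transition p (x i) (m i) (N i) (x i.+1)) ->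
  x K = x 0 -> (forall j, 0 < tnth (x 0) j) -> 0 < \sum_(i < K) m i ->
  Defs.inE p D (\sum_(i < K) m i) (blocks p m N K) /\
  forall s, s <= K ->
    phi p D (\sum_(i < K) m i) (blocks p m N K) (\sum_(i < s) m i) = x s.
Proof.
move=> p_gt1 N_lt xN xK x_gt0 r_gt0.
have cycle := transition_blocks xN; rewrite xK in cycle.
have [U_inE phi0] := inE_transition p_gt1 r_gt0 (blocks_lt N_lt) cycle x_gt0.
split=> // s sK; have [K' Kdef] : exists K', K = s + K' by exists (K - s); rewrite subnKC.
subst K; rewrite big_split_ord /= in U_inE phi0 *.
apply: phi_eq_transition => //; first exact: leq_addr.
rewrite addKn phi0 -xK.
have N'_lt i : i < K' -> forall d, N (s + i) d < p ^ m (s + i).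
  by move=> iK; apply: N_lt; rewrite ltn_add2l.
have -> : [ffun d => blocks p m N (s + K') d %% p ^ (\sum_(i < K') m (s + i))]
          = blocks p (fun i => m (s + i)) (fun i => N (s + i)) K'.
  apply/ffunP => d; rewrite ffunE blocks_split modnMDl modn_small //.
  exact: blocks_lt N'_lt d.
have := transition_blocks (x := fun i => x (s + i))
          (m := fun i => m (s + i)) (N := fun i => N (s + i)) (K := K').
rewrite addn0; apply=> i iK; rewrite addnS; apply: xN; by rewrite ltn_add2l.
Qed.

Lemma bounded_choice (T : Type) (x0 : T) (P : nat -> T -> Prop) k :
  (forall i, i < k -> exists x, P i x) -> exists f : nat -> T, forall i, i < k -> P i (f i).
Proof.
elim: k => [|k IHk] hP; first by exists (fun=> x0).
have [f Pf] := IHk (fun i ik => hP i (ltnW ik)).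
have [x Px] := hP k (ltnSn k).
exists (fun i => if i == k then x else f i) => i; rewrite ltnS leq_eqVlt.
by case: eqP => [-> | _ /= /Pf].
Qed.

Section Splice.
Variables (p n : nat) (D : {fset n.-tuple nat}) (k : nat).
Variables (r : nat -> nat) (W : nat -> fam D) (E : nat -> n.-tuple nat).
Hypotheses (p_gt1 : 1 < p) (k_gt0 : 0 < k).
Hypothesis W_min : forall i, i < k -> minimal p D (r i) (W i).
Hypothesis W_first : forall i, i < k -> phi p D (r i) (W i) 0 = E i.
Hypothesis W_last : forall i, i < k -> phi p D (r i) (W i) (r i - 1) = E i.+1.

(* The chain runs E 0 -> ... -> E k through the high digits W i / p (i < k), then
   back E k -> ... -> E 0 through the last digits W i mod p (i = k - 1, ..., 0). *)
Definition chain_len i := if i < k then r i - 1 else 1.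

Definition chain_block i : fam D :=
  if i < k then [ffun d => W i d %/ p] else [ffun d => W (k + k - i.+1) d %% p].

Definition chain_state i := E (if i <= k then i else k + k - i).

Definition splice := blocks p chain_len chain_block (k + k).

Definition splice_len := \sum_(i < k + k) chain_len i.

Let W_inE i : i < k -> Defs.inE p D (r i) (W i).
Proof. by move=> ik; case: (W_min ik). Qed.

Let r_gt0 i : i < k -> 0 < r i.
Proof. by move=> /W_inE[]. Qed.

Lemma chain_block_lt i d : chain_block i d < p ^ chain_len i.
Proof.
rewrite /chain_block /chain_len; case: ifP => ik; rewrite ffunE.
  have [_ [W_lt _]] := W_inE ik.
  have r1 : (r i - 1).+1 = r i by rewrite subn1 prednK // r_gt0.
  by rewrite ltn_divLR ?(ltnW p_gt1) // -expnSr r1.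
by rewrite expn1 ltn_pmod // (ltnW p_gt1).
Qed.

Lemma chain_transition i : i < k + k ->
  transition p (chain_state i) (chain_len i) (chain_block i) (chain_state i.+1).
Proof.
move=> ikk; rewrite /chain_state /chain_len /chain_block; case: (ltnP i k) => ik.
  rewrite (ltnW ik) -W_first // -W_last //.
  by case: (phi_last_transitions p_gt1 (W_inE ik)).
set j := k + k - i.+1; have jk : j < k by rewrite /j; lia.
rewrite (_ : E (if i <= k then i else k + k - i) = E j.+1); last first.
  by congr E; case: ifP; rewrite /j; lia.
rewrite -W_last // -W_first //.
by case: (phi_last_transitions p_gt1 (W_inE jk)).
Qed.

Lemma chain_len_prefix t : \sum_(i < k + t) chain_len i = \sum_(i < k) (r i - 1) + t.
Proof.
rewrite big_split_ord /=; congr (_ + _).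
  by apply: eq_bigr => i _; rewrite /chain_len ltn_ord.
rewrite -[RHS]card_ord -sum1_card; apply: eq_bigr => i _.
by rewrite /chain_len ltnNge leq_addr.
Qed.

Lemma splice_cycle : Defs.inE p D splice_len splice /\
  forall s, s <= k + k ->
    phi p D splice_len splice (\sum_(i < s) chain_len i) = chain_state s.
Proof.
have len_gt0 : 0 < splice_len by rewrite /splice_len chain_len_prefix ltn_addl.
have closed : chain_state (k + k) = chain_state 0.
  by rewrite /chain_state (_ : (k + k <= k) = false) ?subnn //; lia.
have pos j : 0 < tnth (chain_state 0) j.
  by rewrite /chain_state /= -(W_first k_gt0); apply: phi0_gt0; apply: W_inE.
exact: blocks_cycle p_gt1 (fun i _ => chain_block_lt i) chain_transition closed pos len_gt0.
Qed.

Lemma spU_splice : spU p D splice = \sum_(i < k) spU p D (W i).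
Proof.
have sp_splice d : sp p (splice d) = \sum_(i < k + k) sp p (chain_block i d).
  exact (sp_blocks p_gt1 (fun i _ => chain_block_lt i) d).
rewrite {1}/spU (eq_bigr _ (fun d _ => sp_splice d)) exchange_big big_split_ord /=.
rewrite [X in _ + X](reindex_inj rev_ord_inj) -big_split /=.
apply: eq_bigr => i _; rewrite (spU_div_mod (W i) p_gt1) /spU /chain_block ltn_ord.
rewrite ltnNge leq_addr /=; congr (_ + _); apply: eq_bigr => d _; rewrite !ffunE.
by congr (sp p (W _ d %% p)); have := ltn_ord i; lia.
Qed.

Lemma splice_minimal : minimal p D splice_len splice.
Proof.
split=> [|r' U' U'_inE]; first by case: splice_cycle.
have -> : splice_len = \sum_(i < k) r i.
  rewrite /splice_len chain_len_prefix -[k in _ + k]card_ord -sum1_card -big_split.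
  by apply: eq_bigr => i _; rewrite /= addn1 subn1 prednK ?r_gt0.
rewrite spU_splice big_distrl big_distrr leq_sum // => i _.
by case: (W_min (ltn_ord i)) => _; apply.
Qed.

Lemma splice_mod d : splice d %% p ^ k = \sum_(i < k) p ^ i * (W i d %% p).
Proof.
have unit t : chain_len (k + t) = 1 by rewrite /chain_len ltnNge leq_addr.
have len_k : \sum_(t < k) chain_len (k + t) = k.
  by rewrite (eq_bigr (fun=> 1)) => [|t _]; [rewrite sum1_card card_ord | exact: unit].
rewrite /splice blocks_split len_k modnMDl modn_small; last first.
  by rewrite -[k in p ^ k]len_k; apply: blocks_lt => t _; apply: chain_block_lt.
rewrite blocks_unit //; apply: eq_bigr => i _; rewrite /chain_block ltnNge leq_addr ffunE.
by congr (_ * (W _ d %% p)); have := ltn_ord i; lia.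
Qed.

Lemma splice_phi i : splice_len - k <= i <= splice_len ->
  phi p D splice_len splice i = E (splice_len - i).
Proof.
have len : splice_len = \sum_(j < k) (r j - 1) + k by rewrite /splice_len chain_len_prefix.
move=> /andP[lo hi]; rewrite len in lo hi.
have [t -> tk] : exists2 t, i = \sum_(j < k) (r j - 1) + t & t <= k.
  by exists (i - \sum_(j < k) (r j - 1)); lia.
rewrite -chain_len_prefix (proj2 splice_cycle) ?leq_add2l // chain_len_prefix len.
by rewrite /chain_state; case: leqP => h; congr E; lia.
Qed.

End Splice.

Theorem lemma2p16 (n : nat) (D : {fset n.-tuple nat}) (p k : nat)
  (e : int -> n.-tuple nat) :
  (forall j : 'I_n, exists2 d, d \in D & tnth d j != 0%N) ->
  prime p -> (1 <= k)%N ->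
  (forall i : int, (-1 <= i)%R -> (i <= (Posz k - 1))%R -> Sigma p D (e i)) ->
  (forall i : nat, (i < k)%N -> exists v, Vset p D (e (Posz i)) (e (Posz i - 1)%R) v) ->
  forall V : nat -> fam D,
  (forall i : nat, (i < k)%N -> Vset p D (e (Posz i)) (e (Posz i - 1)%R) (V i)) ->
  exists (r : nat) (U : fam D),
    (k <= r)%N /\ minimal p D r U /\
    (forall d : D, U d %% p ^ k = \sum_(i < k) p ^ i * V i d)%N /\
    (forall i : nat, (r - k <= i)%N -> (i <= r)%N ->
       phi p D r U i = e (Posz r - 1 - Posz i)%R).
Proof.
move=> _ /prime_gt1 p_gt1 k_gt0 _ _ V V_in.
pose E m := e (Posz m - 1)%R.
pose piece i (rW : nat * fam D) :=
  [/\ inMI p D rW.1 rW.2, phi p D rW.1 rW.2 0 = E i,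
      phi p D rW.1 rW.2 (rW.1 - 1) = E i.+1 & V i = psi p D rW.2].
have [rW W_spec] : exists rW, forall i, (i < k)%N -> piece i (rW i).
  apply: (bounded_choice (0%N, [ffun=> 0%N])) => i ik.
  have [r [W [W_MI [W_last [W_first V_i]]]]] := V_in i ik.
  have E_succ : E i.+1 = e (Posz i) by rewrite /E -addn1 PoszD addrK.
  by exists (r, W); split; rewrite //= E_succ.
pose r i := (rW i).1; pose W i := (rW i).2.
have W_min i : (i < k)%N -> minimal p D (r i) (W i) by case/W_spec => [[]].
have W_first i : (i < k)%N -> phi p D (r i) (W i) 0 = E i by case/W_spec.
have W_last i : (i < k)%N -> phi p D (r i) (W i) (r i - 1) = E i.+1 by case/W_spec.
exists (splice_len k r), (splice p k r W); split.
  by rewrite /splice_len chain_len_prefix leq_addl.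
split; first exact: splice_minimal p_gt1 k_gt0 W_min W_first W_last.
split=> [d | i lo hi].
  rewrite (splice_mod p_gt1 k_gt0 W_min); apply: eq_bigr => i _.
  by have [_ _ _ ->] := W_spec i (ltn_ord i); rewrite ffunE.
rewrite (splice_phi p_gt1 k_gt0 W_min W_first W_last) ?lo //.
by rewrite /E -subzn // addrAC.
Qed.
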